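(* Let $S$ be a smooth cubic surface over a field $K$. Suppose $S$ contains a skew pair of $K$-lines $\ell,\ell'$, and let $P\in\ell(K)$ be such that $\Gamma_P$ is the union of $\ell$ and a conic that is irreducible over $K$. Then the point $\ell'\cap\Pi_P$ is not an Eckardt point.
   Context: A smooth cubic surface $S$ over $K$ is a nonsingular surface in $\mathbb{P}^3$ defined by a homogeneous cubic over $K$. A $K$-line is a line in $\mathbb{P}^3$ defined over $K$; lines ''on $S$'' are lines over $\overline{K}$ contained in $S$. A skew pair of lines is a pair of disjoint lines. An Eckardt point is a point of $S$ through which three of the lines on $S$ pass. For $P\in S(\overline{K})$, $\Pi_P$ is the tangent plane to $S$ at $P$ and $\Gamma_P=S\cap\Pi_P$ (a plane cubic curve). *)

From HB Require Import structures.
From mathcomp Require Import all_boot all_order all_algebra.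
Set Implicit Arguments. Unset Strict Implicit. Unset Printing Implicit Defensive.
Import Order.TTheory GRing.Theory Num.Theory.
Local Open Scope ring_scope.

(* Points of P^3 over a field R are nonzero row vectors x : 'rV[R]_4 (up to
   scaling); a line is the row space of a rank-2 matrix B : 'M[R]_(2,4);
   a point x lies on B iff (x <= B)%MS. *)

(* A homogeneous cubic form in x_0..x_3, given by coefficients:
   F(x) = sum_{i,j,k} c i j k x_i x_j x_k  (every cubic form is of this shape). *)
Definition cubic (R : Type) := 'I_4 -> 'I_4 -> 'I_4 -> R.
(* A quadratic form: Q(x) = sum_{i,j} q i j x_i x_j. *)
Definition quad (R : Type) := 'I_4 -> 'I_4 -> R.

Definition cmap (R S : Type) (f : R -> S) (c : cubic R) : cubic S :=
  fun i j k => f (c i j k).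
Definition qmap (R S : Type) (f : R -> S) (q : quad R) : quad S :=
  fun i j => f (q i j).

Definition ceval (R : comNzRingType) (c : cubic R) (x : 'rV[R]_4) : R :=
  \sum_(i < 4) \sum_(j < 4) \sum_(k < 4) c i j k * x 0 i * x 0 j * x 0 k.
Definition qeval (R : comNzRingType) (q : quad R) (x : 'rV[R]_4) : R :=
  \sum_(i < 4) \sum_(j < 4) q i j * x 0 i * x 0 j.
Definition leval (R : comNzRingType) (a x : 'rV[R]_4) : R :=
  \sum_(i < 4) a 0 i * x 0 i.

Definition cderiv (R : comNzRingType) (c : cubic R) (m : 'I_4) (x : 'rV[R]_4) : R :=
  \sum_(i < 4) \sum_(j < 4) \sum_(k < 4) c i j k *
    ((i == m)%:R * (x 0 j * x 0 k) + (j == m)%:R * (x 0 i * x 0 k)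
     + (k == m)%:R * (x 0 i * x 0 j)).
(* gradient; the tangent plane at a smooth point P is {x | leval (grad c P) x = 0} *)
Definition grad (R : comNzRingType) (c : cubic R) (x : 'rV[R]_4) : 'rV[R]_4 :=
  \row_m cderiv c m x.

Definition smooth_cubic (L : fieldType) (c : cubic L) : Prop :=
  forall x : 'rV[L]_4, x != 0 -> ceval c x = 0 -> grad c x != 0.

Definition line_on (L : fieldType) (c : cubic L) (B : 'M[L]_(2,4)) : Prop :=
  \rank B = 2%N /\ forall y : 'rV[L]_4, (y <= B)%MS -> ceval c y = 0.

Definition eckardt (L : fieldType) (c : cubic L) (x : 'rV[L]_4) : Prop :=
  x != 0 /\
  exists B1 B2 B3 : 'M[L]_(2,4),
    [/\ line_on c B1, line_on c B2, line_on c B3,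
        [/\ (x <= B1)%MS, (x <= B2)%MS & (x <= B3)%MS] &
        [/\ ~~ (B1 == B2)%MS, ~~ (B1 == B3)%MS & ~~ (B2 == B3)%MS]].

(* A is a K-line (defined over K) contained in S, geometric lines taken in L. *)
Definition Kline_on (K L : fieldType) (f : {rmorphism K -> L}) (c : cubic K)
  (A : 'M[K]_(2,4)) : Prop :=
  \rank A = 2%N /\ line_on (cmap f c) (map_mx f A).

Definition skew_lines (L : fieldType) (B B' : 'M[L]_(2,4)) : Prop :=
  forall y : 'rV[L]_4, (y <= B)%MS -> (y <= B')%MS -> y = 0.

(* Gamma_P = S cap Pi_P is the union of the K-line A and a conic that is
   irreducible over K: writing lam = grad c p for the equation of Pi_P, there
   are K-forms m (linear), q, g (quadratic) with {lam = 0, m = 0} = A and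
   F = m q + lam g (so F|_{Pi_P} = m|_{Pi_P} * q|_{Pi_P}), and q|_{Pi_P}
   is irreducible over K, i.e. not of the form a b + lam e with a, b, e
   K-linear forms (this also excludes q|_{Pi_P} = 0).  Polynomial identities
   are expressed as identities of functions on L^4 (L is infinite). *)
Definition section_line_plus_Kirred_conic (K L : fieldType)
  (f : {rmorphism K -> L}) (c : cubic K) (p : 'rV[K]_4) (A : 'M[K]_(2,4)) : Prop :=
  let lam := grad c p in
  exists (m : 'rV[K]_4) (q g : quad K),
    [/\ \rank (col_mx lam m) = 2%N,
        A *m m^T = 0,
        (forall x : 'rV[L]_4,
            ceval (cmap f c) x =
            leval (map_mx f m) x * qeval (qmap f q) x
            + leval (map_mx f lam) x * qeval (qmap f g) x) &
        ~ (exists a b e : 'rV[K]_4, forall x : 'rV[L]_4,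
              qeval (qmap f q) x =
              leval (map_mx f a) x * leval (map_mx f b) x
              + leval (map_mx f lam) x * leval (map_mx f e) x)].

From HB Require Import structures.
From mathcomp Require Import all_boot all_order all_algebra.
From mathcomp Require Import ring.
Import GRing.Theory.
Set Implicit Arguments. Unset Strict Implicit. Unset Printing Implicit Defensive.
Local Open Scope ring_scope.

(* Write lam = grad F(P) for the tangent plane Pi_P and
   F = m q + lam g with Gamma_P = {lam = m = 0} U {lam = q = 0}.  Suppose the
   point x = l' cap Pi_P were an Eckardt point.
   - Since l' and l are skew, l' is not contained in Pi_P, so x is the unique
     point of l' on Pi_P; hence x is K-rational up to scaling, and so is the
     tangent plane {nu = 0} at x.  It differs from Pi_P since it contains l'.
   - x is not on l, so m(x) != 0 and x lies on the conic {lam = q = 0}.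
   - At an Eckardt point the tangent section is three concurrent lines, so the
     polar quadric of x vanishes on the tangent plane at x.  Expanding
     F(t x + y) then shows that q vanishes on the line {lam = nu = 0}.
   - A K-form q vanishing on a K-line {lam = nu = 0} is nu b + lam e with
     K-forms b, e, so the conic is reducible over K: contradiction. *)

(* Forms on R^4 are handled through their full polarizations: the trilinear
   form T3 of a cubic and the bilinear form Qb of a quadric. *)
Section MultilinearForms.
Variable R : comNzRingType.
Implicit Types (c : cubic R) (q : quad R) (a b d l u v w y z : 'rV[R]_4) (s t : R).

Definition T3 c a b d : R :=
  \sum_(i < 4) \sum_(j < 4) \sum_(k < 4) c i j k * a 0 i * b 0 j * d 0 k.
Definition Qb q a b : R := \sum_(i < 4) \sum_(j < 4) q i j * a 0 i * b 0 j.

Ltac expand_pointwise :=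
  repeat (first [rewrite -big_split | rewrite mulr_sumr]; apply: eq_bigr => ? _);
  rewrite /= ?mxE; ring.

Lemma T3D1 c a1 a2 b d : T3 c (a1 + a2) b d = T3 c a1 b d + T3 c a2 b d.
Proof. rewrite /T3; expand_pointwise. Qed.
Lemma T3D2 c a1 a2 b d : T3 c b (a1 + a2) d = T3 c b a1 d + T3 c b a2 d.
Proof. rewrite /T3; expand_pointwise. Qed.
Lemma T3D3 c a1 a2 b d : T3 c b d (a1 + a2) = T3 c b d a1 + T3 c b d a2.
Proof. rewrite /T3; expand_pointwise. Qed.
Lemma T3Z1 c s a b d : T3 c (s *: a) b d = s * T3 c a b d.
Proof. rewrite /T3; expand_pointwise. Qed.
Lemma T3Z2 c s a b d : T3 c b (s *: a) d = s * T3 c b a d.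
Proof. rewrite /T3; expand_pointwise. Qed.
Lemma T3Z3 c s a b d : T3 c b d (s *: a) = s * T3 c b d a.
Proof. rewrite /T3; expand_pointwise. Qed.
Lemma QbD1 q a1 a2 b : Qb q (a1 + a2) b = Qb q a1 b + Qb q a2 b.
Proof. rewrite /Qb; expand_pointwise. Qed.
Lemma QbD2 q a1 a2 b : Qb q b (a1 + a2) = Qb q b a1 + Qb q b a2.
Proof. rewrite /Qb; expand_pointwise. Qed.
Lemma QbZ1 q s a b : Qb q (s *: a) b = s * Qb q a b.
Proof. rewrite /Qb; expand_pointwise. Qed.
Lemma QbZ2 q s a b : Qb q b (s *: a) = s * Qb q b a.
Proof. rewrite /Qb; expand_pointwise. Qed.
Lemma levalD l a1 a2 : leval l (a1 + a2) = leval l a1 + leval l a2.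
Proof. rewrite /leval; expand_pointwise. Qed.
Lemma levalZ l s a : leval l (s *: a) = s * leval l a.
Proof. rewrite /leval; expand_pointwise. Qed.
Lemma levalDl l1 l2 a : leval (l1 + l2) a = leval l1 a + leval l2 a.
Proof. rewrite /leval; expand_pointwise. Qed.
Lemma levalZl s l a : leval (s *: l) a = s * leval l a.
Proof. rewrite /leval; expand_pointwise. Qed.
Lemma levalNl l a : leval (- l) a = - leval l a.
Proof. by rewrite -scaleN1r levalZl mulN1r. Qed.

Lemma gradE c y z : leval (grad c y) z = T3 c z y y + T3 c y z y + T3 c y y z.
Proof.
have pick i (g : 'I_4 -> R) : \sum_(m < 4) (i == m)%:R * g m = g i.
  rewrite (bigD1 i) //= eqxx mul1r big1 ?addr0 // => m.
  by rewrite eq_sym => /negbTE ->; rewrite mul0r.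
rewrite /leval /T3 -!big_split /=.
under eq_bigr => m _ do rewrite mxE /cderiv !mulr_suml.
rewrite exchange_big; apply: eq_bigr => i _.
under eq_bigr => m _ do rewrite !mulr_suml.
rewrite -!big_split /= exchange_big; apply: eq_bigr => j _.
under eq_bigr => m _ do rewrite mulr_suml.
rewrite -!big_split /= exchange_big; apply: eq_bigr => k _ /=.
transitivity (\sum_(m < 4) ((c i j k * y 0 j * y 0 k) * ((i == m)%:R * z 0 m)
   + (c i j k * y 0 i * y 0 k) * ((j == m)%:R * z 0 m)
   + (c i j k * y 0 i * y 0 j) * ((k == m)%:R * z 0 m))).
  by apply: eq_bigr => m _; ring.
rewrite !big_split /= -!mulr_sumr !pick; ring.
Qed.

Lemma leval_inj l1 l2 : (forall z, leval l1 z = leval l2 z) -> l1 = l2.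
Proof.
have delta l i : leval l (delta_mx 0 i) = l 0 i.
  rewrite /leval (bigD1 i) //= mxE !eqxx mulr1 big1 ?addr0 // => j ji.
  by rewrite mxE (negbTE ji) andbF mulr0.
by move=> H; apply/rowP => i; rewrite -!delta H.
Qed.

Lemma grad_scale c s y : grad c (s *: y) = s ^+ 2 *: grad c y.
Proof. by apply: leval_inj => z; rewrite levalZl !gradE !(T3Z1, T3Z2, T3Z3); ring. Qed.

Lemma ceval_comb c s t y z :
  ceval c (s *: y + t *: z) = s ^+ 3 * ceval c y + s ^+ 2 * t * leval (grad c y) z
    + s * t ^+ 2 * leval (grad c z) y + t ^+ 3 * ceval c z.
Proof. by rewrite !gradE /ceval -!/(T3 _ _ _ _) !(T3D1, T3D2, T3D3, T3Z1, T3Z2, T3Z3); ring. Qed.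

Lemma qeval_comb q s t y z :
  qeval q (s *: y + t *: z) =
  s ^+ 2 * qeval q y + s * t * (Qb q y z + Qb q z y) + t ^+ 2 * qeval q z.
Proof. by rewrite /qeval -!/(Qb _ _ _) !(QbD1, QbD2, QbZ1, QbZ2); ring. Qed.

Definition polar3 c x y z : R :=
  T3 c x y z + T3 c x z y + T3 c y x z + T3 c z x y + T3 c y z x + T3 c z y x.

Lemma grad_comb_at c s t r x y z :
  leval (grad c (s *: x + t *: y + r *: z)) x =
  3%:R * s ^+ 2 * ceval c x + 2%:R * s * (t * leval (grad c x) y + r * leval (grad c x) z)
  + t ^+ 2 * leval (grad c y) x + t * r * polar3 c x y z + r ^+ 2 * leval (grad c z) x.
Proof.
by rewrite /polar3 !gradE /ceval -!/(T3 _ _ _ _) !(T3D1, T3D2, T3D3, T3Z1, T3Z2, T3Z3); ring.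
Qed.

(* the polar quadric of x on the span of x, y1, y2, when S contains the lines
   xy1 and xy2: only the mixed term survives *)
Lemma polar_on_span c x y1 y2 s t r :
  ceval c x = 0 -> leval (grad c x) y1 = 0 -> leval (grad c x) y2 = 0 ->
  leval (grad c y1) x = 0 -> leval (grad c y2) x = 0 ->
  leval (grad c (s *: x + t *: y1 + r *: y2)) x = t * r * polar3 c x y1 y2.
Proof. by move=> Fx h1 h2 h1' h2'; rewrite grad_comb_at Fx h1 h2 h1' h2'; ring. Qed.

Definition polar_form q u : 'rV[R]_4 := \row_j \sum_(i < 4) (q i j + q j i) * u 0 i.

Lemma polar_formE q u y : leval (polar_form q u) y = Qb q u y + Qb q y u.
Proof.
rewrite /leval /Qb exchange_big -big_split; apply: eq_bigr => j _ /=.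
rewrite mxE mulr_suml -big_split; apply: eq_bigr => i _ /=; ring.
Qed.

Lemma qeval_decomp q l n u v y :
  qeval q (y - leval l y *: u - leval n y *: v) = 0 ->
  qeval q y =
    leval n y * leval (polar_form q v - Qb q u v *: l - Qb q v v *: n) y
    + leval l y * leval (polar_form q u - Qb q u u *: l - Qb q v u *: n) y.
Proof.
rewrite -!scaleNr /qeval -!/(Qb _ _ _) !(QbD1, QbD2, QbZ1, QbZ2) => qw.
rewrite !(levalDl, levalNl, levalZl, polar_formE); apply/eqP; rewrite -subr_eq0 -qw.
apply/eqP; ring.
Qed.
End MultilinearForms.

Section BaseChange.
Variables (K L : fieldType) (f : {rmorphism K -> L}).
Implicit Types (c : cubic K) (q : quad K) (a y : 'rV[K]_4).

Lemma leval_map a y : leval (map_mx f a) (map_mx f y) = f (leval a y).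
Proof. by rewrite /leval rmorph_sum; apply: eq_bigr => i _; rewrite !mxE rmorphM. Qed.

Lemma Qb_map q a y : Qb (qmap f q) (map_mx f a) (map_mx f y) = f (Qb q a y).
Proof.
rewrite /Qb rmorph_sum; apply: eq_bigr => i _; rewrite rmorph_sum.
by apply: eq_bigr => j _; rewrite !mxE !rmorphM.
Qed.

Lemma polar_form_map q a : polar_form (qmap f q) (map_mx f a) = map_mx f (polar_form q a).
Proof.
apply/rowP => j; rewrite !mxE rmorph_sum; apply: eq_bigr => i _.
by rewrite !mxE rmorphM rmorphD.
Qed.

Lemma grad_map c y : map_mx f (grad c y) = grad (cmap f c) (map_mx f y).
Proof.
apply/rowP => m; rewrite !mxE /cderiv rmorph_sum; apply: eq_bigr => i _.
rewrite rmorph_sum; apply: eq_bigr => j _; rewrite rmorph_sum; apply: eq_bigr => k _.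
by rewrite /cmap !mxE !(rmorphM, rmorphD, rmorph_nat).
Qed.
End BaseChange.

(* Linear algebra in 4-space: points and forms are row vectors, lines are
   rank-2 row spaces, and the plane {a = 0} is kermx a^T. *)
Lemma leval_mx (R : comNzRingType) (a y : 'rV[R]_4) : leval a y = (y *m a^T) 0 0.
Proof. by rewrite /leval !mxE; apply: eq_bigr => i _; rewrite mxE mulrC. Qed.

Section Subspaces.
Variable F : fieldType.
Implicit Types (a b l n u v w x y z : 'rV[F]_4).

Lemma mx11_eq0 (M : 'M[F]_1) : (M == 0) = (M 0 0 == 0).
Proof.
apply/eqP/eqP => [->|H]; first by rewrite mxE.
by apply/matrixP => i j; rewrite !ord1 H mxE.
Qed.

Lemma sub_ker_form a y : (y <= kermx a^T)%MS = (leval a y == 0).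
Proof. by rewrite sub_kermx mx11_eq0 leval_mx. Qed.

Lemma sub_ker_forms a b y :
  (y <= kermx (col_mx a b)^T)%MS = (leval a y == 0) && (leval b y == 0).
Proof. by rewrite sub_kermx tr_col_mx mul_mx_row row_mx_eq0 !mx11_eq0 !leval_mx. Qed.

Lemma rank_ker_form a : a != 0 -> \rank (kermx a^T) = 3%N.
Proof. by move=> a0; rewrite mxrank_ker mxrank_tr rank_rV a0. Qed.

Lemma rank2_forms_neq0 a b : \rank (col_mx a b) = 2%N -> a != 0.
Proof.
apply: contra_eqN => /eqP a0; have : (col_mx a b <= b)%MS.
  by rewrite col_mx_sub a0 sub0mx submx_refl.
by move/mxrankS; rewrite rank_rV => le1; apply/eqP => r2; move: le1; rewrite r2; case: (b != 0).
Qed.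

Lemma sub_of_rank m1 m2 k (A : 'M[F]_(m1, k)) (B : 'M[F]_(m2, k)) :
  (A <= B)%MS -> (\rank B <= \rank A)%N -> (B <= A)%MS.
Proof.
move=> sAB rBA; rewrite -(mxrank_leqif_sup sAB).2 eqn_leq rBA.
by rewrite mxrankS.
Qed.

Lemma rank_adds_rV m1 k (A : 'M[F]_(m1, k)) (z : 'rV[F]_k) :
  ~~ (z <= A)%MS -> \rank (A + z)%MS = (\rank A).+1.
Proof.
move=> nzA; have z0 : z != 0 by apply: contraNneq nzA => ->; rewrite sub0mx.
have := mxrank_sum_cap A z; rewrite rank_rV z0 addn1.
suff -> : \rank (A :&: z)%MS = 0%N by rewrite addn0.
apply/eqP; rewrite mxrank_eq0 -submx0; apply: contraNT nzA => nz.
have r1 : \rank (A :&: z)%MS = 1%N.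
  apply/eqP; rewrite eqn_leq lt0n mxrank_eq0 -submx0 nz andbT.
  by have := mxrankS (capmxSr A z); rewrite rank_rV z0.
by apply: submx_trans (capmxSl A z); apply: sub_of_rank (capmxSr A z) _; rewrite r1 rank_rV z0.
Qed.

Lemma sub_adds_rV m1 k (A : 'M[F]_(m1, k)) (y w : 'rV[F]_k) :
  (w <= A + y)%MS -> exists (u : 'rV[F]_k) (b : F), (u <= A)%MS /\ w = u + b *: y.
Proof.
case/sub_addsmxP => [[u1 u2]] /= ->.
exists (u1 *m A), (u2 0 0); split; first exact: submxMl.
by congr (_ + _); rewrite {1}[u2]mx11_scalar mul_scalar_mx.
Qed.

Lemma sub_span3 w x y z :
  (w <= (x + y) + z)%MS -> exists (a b d : F), w = a *: x + b *: y + d *: z.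
Proof.
case/sub_adds_rV => u [d [/sub_adds_rV [u' [b [/sub_rVP [a ->] ->]]] ->]].
by exists a, b, d.
Qed.

Lemma line_eq_of_sub (B1 B2 : 'M[F]_(2, 4)) :
  \rank B1 = 2%N -> \rank B2 = 2%N -> (B2 <= B1)%MS -> (B1 == B2)%MS.
Proof. by move=> r1 r2 s; rewrite /eqmx s sub_of_rank // r1 r2. Qed.

Lemma line_spanned (B : 'M[F]_(2, 4)) x :
  \rank B = 2%N -> (x <= B)%MS -> x != 0 -> exists2 y : 'rV[F]_4, (y <= B)%MS & (B == x + y)%MS.
Proof.
move=> rB xB x0.
have : ~~ (B <= x)%MS by apply: contraTN isT => /mxrankS; rewrite rB rank_rV x0.
case/row_subPn => i yx; exists (row i B); first exact: row_sub.
have sB : (x + row i B <= B)%MS by rewrite addsmx_sub xB row_sub.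
by rewrite /eqmx sB andbT sub_of_rank // rank_adds_rV // rank_rV x0 rB.
Qed.

Lemma same_line (B B' : 'M[F]_(2, 4)) x y y' :
  \rank B = 2%N -> \rank B' = 2%N ->
  (B == x + y)%MS -> (B' == x + y')%MS -> (y' <= x + y)%MS -> (B == B')%MS.
Proof.
move=> rB rB' /andP[_ xyB] /andP[B'xy' _] y'y.
apply: line_eq_of_sub rB rB' (submx_trans B'xy' (submx_trans _ xyB)).
by rewrite addsmx_sub addsmxSl.
Qed.

Lemma line_of_forms (B : 'M[F]_(2, 4)) l n y :
  \rank (col_mx l n) = 2%N -> \rank B = 2%N ->
  (B <= kermx l^T)%MS -> (B <= kermx n^T)%MS ->
  leval l y = 0 -> leval n y = 0 -> (y <= B)%MS.
Proof.
move=> rln rB Bl Bn ly ny; set N := kermx (col_mx l n)^T.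
have BN : (B <= N)%MS.
  move: Bl Bn; rewrite !sub_kermx tr_col_mx mul_mx_row => /eqP-> /eqP->.
  by rewrite row_mx0.
have yN : (y <= N)%MS by rewrite sub_ker_forms ly ny eqxx.
by apply: submx_trans yN (sub_of_rank BN _); rewrite mxrank_ker mxrank_tr rln rB.
Qed.

(* two skew lines span all of 4-space, so they cannot lie in a common plane *)
Lemma skew_line_leaves_plane (B B' : 'M[F]_(2, 4)) a :
  a != 0 -> \rank B = 2%N -> \rank B' = 2%N -> skew_lines B B' ->
  (B <= kermx a^T)%MS -> ~~ (B' <= kermx a^T)%MS.
Proof.
move=> a0 rB rB' skew Ba; apply/negP => B'a.
have rBB' : (\rank (B + B')%MS <= \rank (kermx a^T))%N.
  by rewrite mxrankS // addsmx_sub Ba B'a.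
rewrite rank_ker_form // in rBB'; move: rBB'; have := mxrank_sum_cap B B'; rewrite rB rB'.
have -> : \rank (B :&: B')%MS = 0%N.
  apply/eqP; rewrite mxrank_eq0; apply/eqP/row_matrixP => i; rewrite row0.
  by apply: skew; apply: submx_trans (row_sub i _) _; rewrite ?capmxSl ?capmxSr.
by rewrite addn0 => ->.
Qed.

Lemma rank_line_cap_plane (B : 'M[F]_(2, 4)) a :
  a != 0 -> \rank B = 2%N -> ~~ (B <= kermx a^T)%MS ->
  \rank (B :&: kermx a^T)%MS = 1%N.
Proof.
move=> a0 rB nBa; have rP := rank_ker_form a0.
have full : \rank (B + kermx a^T)%MS = 4%N.
  have : (kermx a^T < B + kermx a^T)%MS.
    by rewrite ltmxE addsmxSr addsmx_sub submx_refl andbT.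
  rewrite ltmxErank rP => /andP[_ lt3].
  by apply/eqP; rewrite eqn_leq rank_leq_col lt3.
have := mxrank_sum_cap B (kermx a^T); rewrite full rB rP => sum.
by apply/eqP; rewrite -(eqn_add2l 4) sum.
Qed.

Lemma form_not_proportional (B : 'M[F]_(2, 4)) a b :
  b != 0 -> (B <= kermx b^T)%MS -> ~~ (B <= kermx a^T)%MS -> ~~ (b <= a)%MS.
Proof.
move=> b0 Bb; apply: contra => /sub_rVP [k bE].
have k0 : k != 0 by apply: contraNneq b0 => k0; rewrite bE k0 scale0r.
by move: Bb; rewrite !sub_kermx bE linearZ /= -scalemxAr scaler_eq0 (negbTE k0).
Qed.

Lemma dual_pair l n : \rank (col_mx l n) = 2%N ->
  exists u v, [/\ leval l u = 1, leval l v = 0, leval n u = 0 & leval n v = 1].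
Proof.
move=> rln; have : row_full (col_mx l n)^T by rewrite /row_full mxrank_tr rln.
case/row_fullP => B; rewrite tr_col_mx mul_mx_row => dualB.
have lB i : leval l (row i B) = (i == 0)%:R.
  by rewrite leval_mx -row_mul mxE -(row_mxEl _ (B *m n^T)) dualB mxE.
have nB i : leval n (row i B) = (i == 1)%:R.
  by rewrite leval_mx -row_mul mxE -(row_mxEr (B *m l^T)) dualB mxE.
by exists (row 0 B), (row 1 B); rewrite !lB !nB.
Qed.
End Subspaces.

Section Rationality.
Variables (K L : fieldType) (f : {rmorphism K -> L}).

Lemma rank1_rational_point m (C : 'M[K]_(m, 4)) (x : 'rV[L]_4) :
  \rank C = 1%N -> (x <= map_mx f C)%MS ->
  exists (x1 : 'rV[K]_4) (s : L), x = s *: map_mx f x1.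
Proof.
move=> rC xC; have : C != 0 by rewrite -mxrank_eq0 rC.
rewrite -submx0 => /row_subPn [i]; rewrite submx0 => ri0; exists (row i C).
have sC : (map_mx f (row i C) <= map_mx f C)%MS by rewrite map_submx row_sub.
have Cr : (map_mx f C <= map_mx f (row i C))%MS.
  by rewrite sub_of_rank // !mxrank_map rC rank_rV ri0.
by apply/sub_rVP; apply: submx_trans xC Cr.
Qed.

Lemma quad_vanishing_on_line (q : quad K) (l n : 'rV[K]_4) :
  \rank (col_mx l n) = 2%N ->
  (forall y : 'rV[L]_4, leval (map_mx f l) y = 0 -> leval (map_mx f n) y = 0 ->
     qeval (qmap f q) y = 0) ->
  exists b e : 'rV[K]_4, forall y : 'rV[L]_4,
    qeval (qmap f q) y = leval (map_mx f n) y * leval (map_mx f b) y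
      + leval (map_mx f l) y * leval (map_mx f e) y.
Proof.
move=> rln qline; have [u [v [lu lv nu nv]]] := dual_pair rln.
exists (polar_form q v - Qb q u v *: l - Qb q v v *: n).
exists (polar_form q u - Qb q u u *: l - Qb q v u *: n) => y.
rewrite !(map_mxB, map_mxZ) -!polar_form_map -!Qb_map.
apply: qeval_decomp; apply: qline;
  by rewrite -!scaleNr !(levalD, levalZ, leval_map, lu, lv, nu, nv, rmorph1, rmorph0); ring.
Qed.
End Rationality.

Section ClosedField.
Variable L : closedFieldType.
Implicit Types (c : cubic L) (w x y z : 'rV[L]_4).

(* a polynomial function of degree <= 3 on the algebraically closed (hence
   infinite) field L vanishes only if all its coefficients do *)
Lemma cubic_poly_eq0 (a0 a1 a2 a3 : L) :
  (forall t, a0 + a1 * t + a2 * t ^+ 2 + a3 * t ^+ 3 = 0) ->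
  [/\ a0 = 0, a1 = 0, a2 = 0 & a3 = 0].
Proof.
move=> vanish; set p := \poly_(i < 4) [:: a0; a1; a2; a3]`_i.
have p0 : p = 0.
  apply/eqP; apply: contraT => /closed_nonrootP [t]; rewrite /root horner_poly.
  by rewrite !big_ord_recr big_ord0 /= add0r expr0 expr1 mulr1 vanish eqxx.
have coef i : p`_i = 0 by rewrite p0 coef0.
by move: (coef 0%N) (coef 1%N) (coef 2%N) (coef 3%N); rewrite !coef_poly.
Qed.

Lemma line_in_tangent_plane c (B : 'M[L]_(2, 4)) y z :
  line_on c B -> (y <= B)%MS -> (z <= B)%MS -> leval (grad c y) z = 0.
Proof.
move=> [_ onS] yB zB.
suff [_ -> _ _] : [/\ ceval c y = 0, leval (grad c y) z = 0,
    leval (grad c z) y = 0 & ceval c z = 0] by [].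
apply: cubic_poly_eq0 => t.
have sB : ((1 *: y + t *: z)%R <= B)%MS by rewrite addmx_sub ?scalemx_sub.
by rewrite -(onS _ sB) ceval_comb !expr1n; ring.
Qed.

Lemma tangent_plane_contains_line c (B : 'M[L]_(2, 4)) y :
  line_on c B -> (y <= B)%MS -> (B <= kermx (grad c y)^T)%MS.
Proof.
move=> lB yB; apply/row_subP => i; rewrite sub_ker_form.
by rewrite (line_in_tangent_plane lB yB (row_sub i B)).
Qed.

(* at an Eckardt point x the tangent plane section consists of three concurrent
   lines, so the polar quadric w |-> grad_w(F)(x) vanishes on the tangent plane *)
Lemma eckardt_polar_vanishes c x : grad c x != 0 -> eckardt c x ->
  forall w, leval (grad c x) w = 0 -> leval (grad c w) x = 0.
Proof.
move=> mu0 [x0 [B1 [B2 [B3 [l1 l2 l3 [xB1 xB2 xB3] [n12 n13 n23]]]]]].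
have [y1 y1B eB1] := line_spanned (proj1 l1) xB1 x0.
have [y2 y2B eB2] := line_spanned (proj1 l2) xB2 x0.
have [y3 y3B eB3] := line_spanned (proj1 l3) xB3 x0.
have Fx : ceval c x = 0 := proj2 l1 x xB1.
have tangent B y : line_on c B -> (x <= B)%MS -> (y <= B)%MS ->
    leval (grad c x) y = 0 /\ leval (grad c y) x = 0.
  by move=> lB xB yB; split; apply: (line_in_tangent_plane lB).
have [gx1 g1x] := tangent _ _ l1 xB1 y1B.
have [gx2 g2x] := tangent _ _ l2 xB2 y2B.
have [gx3 g3x] := tangent _ _ l3 xB3 y3B.
(* the tangent plane at x is spanned by x, y1, y2 *)
have span_T w : leval (grad c x) w = 0 ->
    exists a b d, w = a *: x + b *: y1 + d *: y2.
  move=> gw; apply: sub_span3.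
  apply: submx_trans (_ : w <= kermx (grad c x)^T)%MS _; first by rewrite sub_ker_form gw.
  apply: sub_of_rank.
    by rewrite !addsmx_sub !sub_ker_form (line_in_tangent_plane l1 xB1 xB1) gx1 gx2 eqxx.
  have y2_new : ~~ (y2 <= x + y1)%MS.
    by apply: contra n12 => /(same_line (proj1 l1) (proj1 l2) eB1 eB2).
  by rewrite rank_ker_form // rank_adds_rV // -(eqmx_rank eB1) (proj1 l1).
have [a [b [d y3E]]] := span_T _ gx3.
have b0 : b != 0.
  apply: contra n23 => /eqP b0; apply: same_line (proj1 l2) (proj1 l3) eB2 eB3 _.
  by rewrite y3E b0 scale0r addr0 addmx_sub ?scalemx_sub ?addsmxSl ?addsmxSr.
have d0 : d != 0.
  apply: contra n13 => /eqP d0; apply: same_line (proj1 l1) (proj1 l3) eB1 eB3 _.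
  by rewrite y3E d0 scale0r addr0 addmx_sub ?scalemx_sub ?addsmxSl ?addsmxSr.
have P0 : polar3 c x y1 y2 = 0.
  move: g3x; rewrite y3E polar_on_span // => /eqP.
  by rewrite !mulf_eq0 (negbTE b0) (negbTE d0) => /eqP.
by move=> w /span_T [a' [b' [d' ->]]]; rewrite polar_on_span // P0 mulr0.
Qed.

Lemma conic_contains_tangent_line c (m lam : 'rV[L]_4) (q g : quad L) x :
  (forall z, ceval c z = leval m z * qeval q z + leval lam z * qeval g z) ->
  ceval c x = 0 -> leval lam x = 0 -> leval m x != 0 ->
  (forall w, leval (grad c x) w = 0 -> leval (grad c w) x = 0) ->
  forall y, leval lam y = 0 -> leval (grad c x) y = 0 -> qeval q y = 0.
Proof.
move=> Fid Fx lx mx0 polar y ly gy.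
have qx : qeval q x = 0.
  by apply/eqP; move: (Fid x); rewrite Fx lx mul0r addr0 => /esym/eqP;
    rewrite mulf_eq0 (negbTE mx0).
set Mx := leval m x; set My := leval m y; set Qy := qeval q y.
set Bxy := Qb q x y + Qb q y x.
(* F(t x + y) = (t Mx + My)(t Bxy + Qy) must equal F(y) + t^3 F(x) for all t *)
have coeffs t : (ceval c y - My * Qy) + (- (Mx * Qy + My * Bxy)) * t
    + (- (Mx * Bxy)) * t ^+ 2 + 0 * t ^+ 3 = 0.
  have := Fid (t *: x + 1 *: y).
  rewrite ceval_comb qeval_comb !levalD !levalZ Fx gy (polar _ gy) qx lx ly.
  rewrite -/Mx -/My -/Qy -/Bxy => E.
  have -> : ceval c y = (t * Mx + My) * (t * Bxy + Qy).
    by apply: etrans (etrans E _); ring.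
  ring.
have [_ /eqP h1 /eqP h2 _] := cubic_poly_eq0 coeffs.
move: h2; rewrite oppr_eq0 mulf_eq0 (negbTE mx0) => /eqP B0.
by move: h1; rewrite B0 mulr0 addr0 oppr_eq0 mulf_eq0 (negbTE mx0) => /eqP.
Qed.

End ClosedField.

Theorem mainTheorem7 (K : fieldType) (L : closedFieldType)
  (f : {rmorphism K -> L}) (c : cubic K)
  (A A' : 'M[K]_(2,4)) (p : 'rV[K]_4) :
  smooth_cubic (cmap f c) ->
  Kline_on f c A -> Kline_on f c A' ->
  skew_lines (map_mx f A) (map_mx f A') ->
  p != 0 -> (p <= A)%MS ->
  section_line_plus_Kirred_conic f c p A ->
  forall x : 'rV[L]_4, x != 0 ->
    (x <= map_mx f A')%MS -> leval (map_mx f (grad c p)) x = 0 ->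
    ~ eckardt (cmap f c) x.
Proof.
move=> smooth [_ lA] [rA' lA'] skew _ pA [m [q [g [rk AmT Fid nirr]]]] x x0 xA' lx Ex.
set lam := grad c p in rk Fid nirr lx.
have lam0 : lam != 0 := rank2_forms_neq0 rk.
have lamL0 : map_mx f lam != 0 by rewrite map_mx_eq0.
have lamA : (map_mx f A <= kermx (map_mx f lam)^T)%MS.
  by rewrite /lam grad_map tangent_plane_contains_line // map_submx.
(* x is off the line A, hence off the component {m = 0} of Pi_P cap S *)
have mx0 : leval (map_mx f m) x != 0.
  apply: contra_neq x0 => mx; apply: skew xA'.
  apply: line_of_forms (proj1 lA) lamA _ lx mx; first by rewrite -map_col_mx mxrank_map.
  by rewrite sub_kermx map_trmx -map_mxM AmT map_mx0.
(* A' meets Pi_P in a single point, which is therefore defined over K *)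
have A'L_off := skew_line_leaves_plane lamL0 (proj1 lA) (proj1 lA') skew lamA.
have A'_off : ~~ (A' <= kermx lam^T)%MS by rewrite -(map_submx f) map_kermx -map_trmx.
have xK : (x <= map_mx f (A' :&: kermx lam^T))%MS.
  by rewrite map_capmx sub_capmx xA' map_kermx -map_trmx sub_ker_form lx eqxx.
have [x1 [s xE]] := rank1_rational_point (rank_line_cap_plane lam0 rA' A'_off) xK.
set nu := grad c x1.
have muE : grad (cmap f c) x = s ^+ 2 *: map_mx f nu by rewrite xE grad_scale grad_map.
have mu0 : grad (cmap f c) x != 0 by apply: smooth x0 (proj2 lA' x xA').
(* the tangent plane at x contains A' but Pi_P does not: they are distinct *)
have nu_off : ~~ (nu <= lam)%MS.
  apply: contra (form_not_proportional mu0 (tangent_plane_contains_line lA' xA') A'L_off).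
  by rewrite -(map_submx f) muE => /(scalemx_sub (s ^+ 2)).
have rk_nu : \rank (col_mx lam nu) = 2%N by rewrite -addsmxE rank_adds_rV // rank_rV lam0.
(* the conic {lam = q = 0} would contain the K-line {lam = nu = 0} *)
have qline := conic_contains_tangent_line Fid (proj2 lA' x xA') lx mx0
  (eckardt_polar_vanishes mu0 Ex).
apply: nirr; exists nu; apply: quad_vanishing_on_line rk_nu _ => y ly ny.
by apply: qline ly _; rewrite muE levalZl ny mulr0.
Qed.
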